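(* For integers $k\ge0$ and $q\ge2$, \[ \sum_{n=0}^\infty\frac{P_k(H_n,H_n^{(2)},\dots,H_n^{(k)})}{(n+1)(n+2)\cdots(n+q)}=\frac{1}{(q-1)!}\cdot\frac{1}{(q-1)^{k+1}}. \]
   Context: For integers $r\ge1$ and $n\ge0$, $H_n^{(r)}=\sum_{j=1}^n j^{-r}$ (so $H_0^{(r)}=0$) and $H_n=H_n^{(1)}$. $P_0=1$ and for $n\ge1$, $P_n(y_1,\dots,y_n)=\sum_{m_1+2m_2+\cdots=n}\frac{(-1)^{m_2+m_4+\cdots}}{m_1!m_2!\cdots}\prod_{i\ge1}(y_i/i)^{m_i}$ (sum over tuples of nonnegative integers), i.e. $P_n(p_1,\dots,p_n)=e_n$ expresses the elementary symmetric function via power sums. *)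

From Stdlib Require Import Reals Arith.
Open Scope R_scope.

Fixpoint harm (r n : nat) : R :=
  match n with
  | O => 0
  | S n' => harm r n' + / (INR n ^ r)
  end.

(* Contribution of part-size l with multiplicity m in the definition of P_n:
   (-1)^(m if l is even) / m! * (y_l / l)^m. *)
Definition Pfactor (y : nat -> R) (l m : nat) : R :=
  (if Nat.even l then (-1) ^ m else 1) / INR (fact m) * (y l / INR l) ^ m.

Fixpoint sumR (M : nat) (f : nat -> R) : R :=
  match M with
  | O => f O
  | S M' => sumR M' f + f M
  end.

(* Pq y i r = sum over tuples (m_1,...,m_i) of nonnegative integers with
   m_1 + 2 m_2 + ... + i m_i = r of prod_{l=1}^i Pfactor y l m_l,
   computed by summing out m_i, then m_{i-1}, etc. *)
Fixpoint Pq (y : nat -> R) (i r : nat) : R :=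
  match i with
  | O => if Nat.eqb r 0 then 1 else 0
  | S i' => sumR r (fun m =>
              if Nat.leb (i * m) r then Pfactor y i m * Pq y i' (r - i * m) else 0)
  end.

(* P_n(y_1,...,y_n): for tuples with m_1+2m_2+... = n, m_l = 0 for l > n. P_0 = 1. *)
Definition P (n : nat) (y : nat -> R) : R := Pq y n n.

Fixpoint risingR (n q : nat) : R :=
  match q with
  | O => 1
  | S q' => risingR n q' * INR (n + q)
  end.

(* The summand is e_k(1, 1/2, ..., 1/n), the k-th elementary symmetric function of the
   reciprocals: P_k turns power sums into elementary symmetric functions, because P_k and e_k
   obey the same Newton identities k e_k = sum_{l=1}^k (-1)^(l-1) p_l e_(k-l).
   With q = p + 1, summation by parts against
     p / ((n+1)...(n+p+1)) = 1/((n+1)...(n+p)) - 1/((n+2)...(n+p+1))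
   and e_k(n+1) = e_k(n) + e_(k-1)(n)/(n+1) shows that the series S_k satisfies
   S_k = S_(k-1) / p, with S_0 = 1 / (p p!).  The boundary terms vanish since
   e_k(n)/n -> 0, which follows by induction on k from Cesaro's theorem. *)

From Stdlib Require Import Reals Arith Lia Lra.
Open Scope R_scope.

Fixpoint sum_1_n (n : nat) (g : nat -> R) : R :=
  match n with
  | O => 0
  | S n' => sum_1_n n' g + g n
  end.

Lemma sum_1_n_ext n f g :
  (forall l, (1 <= l <= n)%nat -> f l = g l) -> sum_1_n n f = sum_1_n n g.
Proof.
  induction n as [|n IH]; intros Hfg; simpl; [reflexivity|].
  rewrite IH by (intros; apply Hfg; lia); rewrite Hfg by lia; reflexivity.
Qed.

Lemma sum_1_n_zero n g : (forall l, (1 <= l <= n)%nat -> g l = 0) -> sum_1_n n g = 0.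
Proof.
  induction n as [|n IH]; intros Hg; simpl; [reflexivity|].
  rewrite IH by (intros; apply Hg; lia); rewrite Hg by lia; ring.
Qed.

Lemma sum_1_n_plus n f g : sum_1_n n (fun l => f l + g l) = sum_1_n n f + sum_1_n n g.
Proof. induction n as [|n IH]; simpl; [|rewrite IH]; ring. Qed.

Lemma sum_1_n_scal n c g : sum_1_n n (fun l => c * g l) = c * sum_1_n n g.
Proof. induction n as [|n IH]; simpl; [|rewrite IH]; ring. Qed.

Lemma sum_1_n_telescope n u : sum_1_n n (fun l => u l - u (S l)) = u 1%nat - u (S n).
Proof. induction n as [|n IH]; simpl; [|rewrite IH]; ring. Qed.

Lemma sum_1_n_restrict n g :
  sum_1_n (S n) (fun l => if (l <=? n)%nat then g l else 0) = sum_1_n n g.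
Proof.
  cbn [sum_1_n]; destruct (Nat.leb_spec (S n) n); [lia|]; rewrite Rplus_0_r.
  apply sum_1_n_ext; intros l Hl; destruct (Nat.leb_spec l n); [reflexivity|lia].
Qed.

Lemma sum_1_n_sum_f_R0 n M g :
  sum_1_n n (fun l => sum_f_R0 (g l) M) = sum_f_R0 (fun m => sum_1_n n (fun l => g l m)) M.
Proof.
  induction n as [|n IH]; simpl.
  - symmetry; apply sum_eq_R0; reflexivity.
  - rewrite IH, <- sum_plus; reflexivity.
Qed.

Lemma sumR_sum_f_R0 M f : sumR M f = sum_f_R0 f M.
Proof. induction M as [|M IH]; simpl; [|rewrite IH]; reflexivity. Qed.

Lemma sum_f_R0_trunc f M r :
  (r <= M)%nat -> (forall m, (r < m <= M)%nat -> f m = 0) -> sum_f_R0 f M = sum_f_R0 f r.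
Proof.
  induction M as [|M IH]; intros HrM Hf.
  - replace r with 0%nat by lia; reflexivity.
  - destruct (Nat.eq_dec r (S M)) as [->|Hr]; [reflexivity|].
    simpl; rewrite IH by (lia || (intros; apply Hf; lia)); rewrite Hf by lia; ring.
Qed.

(** * Newton's identities for [P] and for elementary symmetric functions *)

(* In generating-function terms, [shift_seq l B] is the coefficient sequence of t^l B(t)
   and [dconv d f B] that of F(t^d) B(t), where F and B have coefficients f and B. *)
Definition shift_seq (l : nat) (B : nat -> R) (r : nat) : R :=
  if (l <=? r)%nat then B (r - l)%nat else 0.

Section DilatedConvolution.

Variable d : nat.

Definition dconv (f B : nat -> R) (r : nat) : R :=
  sum_f_R0 (fun m => if (d * m <=? r)%nat then f m * B (r - d * m)%nat else 0) r.

Lemma dconv_ext f f' B B' r :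
  (forall m, f m = f' m) -> (forall s, B s = B' s) -> dconv f B r = dconv f' B' r.
Proof. intros Hf HB; unfold dconv; apply sum_eq; intros m _; rewrite Hf, HB; reflexivity. Qed.

Lemma dconv_scal_l c f B r : dconv (fun m => c * f m) B r = c * dconv f B r.
Proof.
  unfold dconv; rewrite scal_sum; apply sum_eq; intros m _.
  destruct (d * m <=? r)%nat; ring.
Qed.

Lemma dconv_scal_r c f B r : dconv f (fun s => c * B s) r = c * dconv f B r.
Proof.
  unfold dconv; rewrite scal_sum; apply sum_eq; intros m _.
  destruct (d * m <=? r)%nat; ring.
Qed.

Lemma dconv_weight f B r :
  INR r * dconv f B r
  = dconv (fun m => INR (d * m) * f m) B r + dconv f (fun s => INR s * B s) r.
Proof.
  unfold dconv; rewrite scal_sum, <- sum_plus; apply sum_eq; intros m _.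
  destruct (Nat.leb_spec (d * m) r); [|ring].
  replace (INR r) with (INR (d * m) + INR (r - d * m)) by (rewrite <- plus_INR; f_equal; lia).
  ring.
Qed.

Lemma dconv_sum_1_n f G n r :
  dconv f (fun s => sum_1_n n (fun l => G l s)) r = sum_1_n n (fun l => dconv f (G l) r).
Proof.
  unfold dconv; rewrite sum_1_n_sum_f_R0; apply sum_eq; intros m _.
  destruct (d * m <=? r)%nat.
  - rewrite sum_1_n_scal; reflexivity.
  - symmetry; apply sum_1_n_zero; reflexivity.
Qed.

Hypothesis d_pos : (0 < d)%nat.

Lemma dconv_bound f B r M : (r <= M)%nat ->
  dconv f B r = sum_f_R0 (fun m => if (d * m <=? r)%nat then f m * B (r - d * m)%nat else 0) M.
Proof.
  intros HrM; unfold dconv; symmetry; apply sum_f_R0_trunc; [exact HrM|].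
  intros m Hm; destruct (Nat.leb_spec (d * m) r); [nia|reflexivity].
Qed.

Lemma dconv_shift_seq l f B r : dconv f (shift_seq l B) r = shift_seq l (dconv f B) r.
Proof.
  unfold shift_seq at 2; destruct (Nat.leb_spec l r) as [Hl|Hl].
  - rewrite (dconv_bound f B (r - l) r) by lia; unfold dconv, shift_seq.
    apply sum_eq; intros m _.
    destruct (Nat.leb_spec (d * m) r), (Nat.leb_spec l (r - d * m)),
      (Nat.leb_spec (d * m) (r - l)); try lia; try ring.
    replace (r - d * m - l)%nat with (r - l - d * m)%nat by lia; reflexivity.
  - unfold dconv, shift_seq; apply sum_eq_R0; intros m _.
    destruct (Nat.leb_spec (d * m) r), (Nat.leb_spec l (r - d * m)); try lia; ring.
Qed.

(* t d/dt F(t^d) = t^d G(t^d) with G_m = d (m+1) f_(m+1). *)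
Lemma dconv_index_weight f B r :
  dconv (fun m => INR (d * m) * f m) B r
  = shift_seq d (dconv (fun m => INR (d * S m) * f (S m)) B) r.
Proof.
  unfold shift_seq; destruct r as [|r].
  - destruct (Nat.leb_spec d 0); [lia|].
    unfold dconv; simpl sum_f_R0; rewrite Nat.mul_0_r; simpl; ring.
  - unfold dconv at 1; rewrite decomp_sum by lia; simpl pred.
    rewrite Nat.mul_0_r, Rmult_0_l, Rmult_0_l, Rplus_0_l.
    destruct (Nat.leb_spec d (S r)).
    + rewrite (dconv_bound _ B (S r - d) r) by lia; apply sum_eq; intros m _.
      destruct (Nat.leb_spec (d * S m) (S r)), (Nat.leb_spec (d * m) (S r - d));
        try nia; [|ring].
      replace (S r - d * S m)%nat with (S r - d - d * m)%nat by nia; ring.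
    + apply sum_eq_R0; intros m _; destruct (Nat.leb_spec (d * S m) (S r)); [nia|reflexivity].
Qed.

End DilatedConvolution.

Definition newton_sign (l : nat) : R := if Nat.even l then -1 else 1.

Lemma newton_sign_S l : newton_sign (S l) = - newton_sign l.
Proof.
  unfold newton_sign; rewrite Nat.even_succ, <- Nat.negb_even.
  destruct (Nat.even l); simpl; ring.
Qed.

Lemma Pq_S y i r : Pq y (S i) r = dconv (S i) (Pfactor y (S i)) (Pq y i) r.
Proof. apply sumR_sum_f_R0. Qed.

Lemma Pq_ext y y' i r : (forall l, y l = y' l) -> Pq y i r = Pq y' i r.
Proof.
  intros Hy; revert r; induction i as [|i IH]; intros r; [reflexivity|].
  rewrite !Pq_S; apply dconv_ext; [|exact IH].
  intros m; unfold Pfactor; rewrite Hy; reflexivity.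
Qed.

Lemma Pfactor_0 y l : Pfactor y l 0 = 1.
Proof. unfold Pfactor; destruct (Nat.even l); simpl; field. Qed.

Lemma Pfactor_S y l m : (0 < l)%nat ->
  INR (l * S m) * Pfactor y l (S m) = newton_sign l * y l * Pfactor y l m.
Proof.
  intros Hl; unfold Pfactor, newton_sign.
  change (fact (S m)) with (S m * fact m)%nat; rewrite !mult_INR.
  assert (INR l <> 0) by (apply not_0_INR; lia).
  assert (INR (S m) <> 0) by (apply not_0_INR; lia).
  assert (INR (fact m) <> 0) by (apply INR_fact_neq_0).
  destruct (Nat.even l); simpl pow; field; auto.
Qed.

(* [Pq y i] has generating function prod_(l<=i) exp(newton_sign l * y l * t^l / l); applying
   t d/dt to it gives Newton's identity. *)
Lemma Pq_newton y i r :
  INR r * Pq y i r = sum_1_n i (fun l => newton_sign l * y l * shift_seq l (Pq y i) r).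
Proof.
  revert r; induction i as [|i IH]; intros r.
  - simpl; destruct (Nat.eqb_spec r 0) as [->|]; simpl; ring.
  - set (c := fun l => newton_sign l * y l).
    rewrite Pq_S, dconv_weight, dconv_index_weight by lia.
    rewrite (dconv_ext (S i) _ _ _ (fun s => sum_1_n i (fun l => c l * shift_seq l (Pq y i) s)))
      by (reflexivity || apply IH).
    rewrite dconv_sum_1_n.
    assert (Hlast : shift_seq (S i)
        (dconv (S i) (fun m => INR (S i * S m) * Pfactor y (S i) (S m)) (Pq y i)) r
      = c (S i) * shift_seq (S i) (Pq y (S i)) r).
    { unfold shift_seq; destruct (S i <=? r)%nat; [|ring].
      rewrite Pq_S, <- dconv_scal_l; apply dconv_ext; [|reflexivity].
      intros m; apply Pfactor_S; lia. }
    assert (Hrest : sum_1_n i (fun l => dconv (S i) (Pfactor y (S i))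
                                          (fun s => c l * shift_seq l (Pq y i) s) r)
      = sum_1_n i (fun l => c l * shift_seq l (Pq y (S i)) r)).
    { apply sum_1_n_ext; intros l _.
      rewrite dconv_scal_r, dconv_shift_seq by lia.
      unfold shift_seq; destruct (l <=? r)%nat; [rewrite Pq_S|]; reflexivity. }
    rewrite Hlast, Hrest; cbn [sum_1_n]; unfold c; ring.
Qed.

Lemma Pq_S_large y i r : (r <= i)%nat -> Pq y (S i) r = Pq y i r.
Proof.
  intros Hr; rewrite Pq_S; unfold dconv.
  rewrite (sum_f_R0_trunc _ r 0)
    by (lia || (intros m Hm; destruct (Nat.leb_spec (S i * m) r); [nia|reflexivity])).
  cbn [sum_f_R0]; rewrite Nat.mul_0_r, Nat.sub_0_r, Pfactor_0; cbn [Nat.leb]; ring.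
Qed.

Lemma Pq_stable y i r : (r <= i)%nat -> Pq y i r = P r y.
Proof.
  induction i as [|i IH]; intros Hr.
  - replace r with 0%nat by lia; reflexivity.
  - destruct (Nat.eq_dec r (S i)) as [->|Hne]; [reflexivity|].
    rewrite Pq_S_large by lia; apply IH; lia.
Qed.

Lemma P_newton y k :
  INR k * P k y = sum_1_n k (fun l => newton_sign l * y l * P (k - l) y).
Proof.
  unfold P at 1; rewrite Pq_newton; apply sum_1_n_ext; intros l Hl.
  unfold shift_seq; destruct (Nat.leb_spec l k); [|lia].
  rewrite Pq_stable by lia; reflexivity.
Qed.

Fixpoint esym (x : nat -> R) (n k : nat) : R :=
  match k, n with
  | O, _ => 1
  | S _, O => 0
  | S k', S n' => esym x n' k + x n * esym x n' k'
  end.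

Definition power_sum (x : nat -> R) (n l : nat) : R := sum_1_n n (fun j => x j ^ l).

Lemma esym_0 x n : esym x n 0 = 1.
Proof. destruct n; reflexivity. Qed.

Lemma esym_S_S x n k : esym x (S n) (S k) = esym x n (S k) + x (S n) * esym x n k.
Proof. reflexivity. Qed.

Lemma esym_S x n j : esym x (S n) j = esym x n j + x (S n) * shift_seq 1 (esym x n) j.
Proof.
  destruct j as [|j].
  - rewrite !esym_0; unfold shift_seq; simpl; ring.
  - rewrite esym_S_S; unfold shift_seq; simpl; rewrite Nat.sub_0_r; reflexivity.
Qed.

Lemma shift_seq_S l B r : shift_seq (S l) B (S r) = shift_seq l B r.
Proof. reflexivity. Qed.

(* The terms telescope by e_j(n+1) = e_j(n) + x_(n+1) e_(j-1)(n). *)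
Lemma esym_sign_sum x n k :
  sum_1_n (S k) (fun l => newton_sign l * x (S n) ^ l * esym x (S n) (S k - l))
  = x (S n) * esym x n k.
Proof.
  set (t := x (S n)).
  set (u := fun l => newton_sign l * t ^ l * shift_seq l (esym x n) (S k)).
  transitivity (sum_1_n (S k) (fun l => u l - u (S l))).
  - apply sum_1_n_ext; intros l Hl; unfold u.
    rewrite esym_S, shift_seq_S, newton_sign_S; fold t; simpl pow.
    unfold shift_seq; destruct (Nat.leb_spec 1 (S k - l)), (Nat.leb_spec l k),
      (Nat.leb_spec l (S k)); try lia; [|ring].
    replace (S k - l - 1)%nat with (k - l)%nat by lia; ring.
  - rewrite sum_1_n_telescope; unfold u; rewrite !shift_seq_S; unfold shift_seq.
    destruct (Nat.leb_spec 0 k); [|lia]; destruct (Nat.leb_spec (S k) k); [lia|].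
    rewrite Nat.sub_0_r; change (newton_sign 1) with 1; ring.
Qed.

Lemma esym_newton x n k :
  INR k * esym x n k = sum_1_n k (fun l => newton_sign l * power_sum x n l * esym x n (k - l)).
Proof.
  revert k; induction n as [|n IH]; intros k.
  - destruct k as [|k]; [simpl; ring|].
    rewrite sum_1_n_zero; [simpl; ring|intros l _; unfold power_sum; simpl; ring].
  - destruct k as [|k]; [simpl; ring|].
    transitivity (INR (S k) * esym x n (S k) + x (S n) * (INR k * esym x n k)
                  + x (S n) * esym x n k).
    { rewrite esym_S_S, S_INR; ring. }
    rewrite IH, IH, <- esym_sign_sum, <- (sum_1_n_restrict k), <- sum_1_n_scal,
      <- !sum_1_n_plus.
    apply sum_1_n_ext; intros l Hl.
    unfold power_sum; cbn [sum_1_n]; rewrite esym_S; unfold shift_seq.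
    destruct (Nat.leb_spec 1 (S k - l)), (Nat.leb_spec l k); try lia; [|ring].
    replace (S k - l - 1)%nat with (k - l)%nat by lia; ring.
Qed.

Theorem P_power_sum x n k : P k (power_sum x n) = esym x n k.
Proof.
  induction k as [k IH] using lt_wf_ind; destruct k as [|k].
  - rewrite esym_0; reflexivity.
  - apply Rmult_eq_reg_l with (INR (S k)); [|apply not_0_INR; lia].
    rewrite P_newton, esym_newton; apply sum_1_n_ext; intros l Hl.
    rewrite IH by lia; reflexivity.
Qed.

Definition recip (j : nat) : R := / INR j.

Lemma harm_power_sum l n : harm l n = power_sum recip n l.
Proof.
  induction n as [|n IH]; [reflexivity|].
  unfold power_sum, recip in *; cbn [harm sum_1_n]; rewrite IH, pow_inv; reflexivity.
Qed.

Lemma risingR_ge_1 n p : 1 <= risingR n p.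
Proof.
  induction p as [|p IH]; simpl; [lra|].
  assert (1 <= INR (n + S p)) by (apply (le_INR 1); lia).
  nra.
Qed.

Lemma risingR_neq_0 n p : risingR n p <> 0.
Proof. pose proof (risingR_ge_1 n p); lra. Qed.

Lemma risingR_ge n p : (0 < p)%nat -> INR (S n) <= risingR n p.
Proof.
  intros Hp; destruct p as [|p]; [lia|]; simpl risingR.
  pose proof (risingR_ge_1 n p).
  assert (INR (S n) <= INR (n + S p)) by (apply le_INR; lia).
  pose proof (pos_INR (S n)); nra.
Qed.

Lemma risingR_S_front n p : risingR n (S p) = INR (S n) * risingR (S n) p.
Proof.
  induction p as [|p IH].
  - cbn [risingR]; rewrite Nat.add_1_r; ring.
  - change (risingR n (S (S p))) with (risingR n (S p) * INR (n + S (S p))).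
    rewrite IH; cbn [risingR]; replace (n + S (S p))%nat with (S n + S p)%nat by lia; ring.
Qed.

Lemma risingR_0 p : risingR 0 p = INR (fact p).
Proof.
  induction p as [|p IH]; [reflexivity|].
  cbn [risingR]; rewrite IH; change (fact (S p)) with (S p * fact p)%nat.
  rewrite mult_INR; rewrite Nat.add_0_l; ring.
Qed.

Lemma risingR_telescope n p :
  INR p / risingR n (S p) = / risingR n p - / risingR (S n) p.
Proof.
  assert (Hfront := risingR_S_front n p).
  assert (Hback : risingR n (S p) = risingR n p * (INR (S n) + INR p))
    by (cbn [risingR]; rewrite <- plus_INR; do 2 f_equal; lia).
  pose proof (risingR_neq_0 n p); pose proof (risingR_neq_0 (S n) p).
  assert (INR (S n) <> 0) by (apply not_0_INR; lia).
  assert (HS : / risingR (S n) p = INR (S n) / risingR n (S p)) by (rewrite Hfront; field; auto).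
  rewrite HS, Hback; field; split; [|assumption].
  pose proof (pos_INR p); pose proof (lt_0_INR (S n) ltac:(lia)); lra.
Qed.

Lemma Un_cv_const c : Un_cv (fun _ => c) c.
Proof. intros eps Heps; exists 0%nat; intros; unfold Rdist; rewrite Rminus_diag, Rabs_R0; lra. Qed.

Lemma Un_cv_squeeze_0 u v N0 :
  (forall N, (N0 <= N)%nat -> 0 <= u N <= v N) -> Un_cv v 0 -> Un_cv u 0.
Proof.
  intros Huv Hv eps Heps; destruct (Hv eps Heps) as [N HN]; exists (max N N0).
  intros n Hn; specialize (HN n ltac:(lia)); specialize (Huv n ltac:(lia)).
  unfold Rdist in *; rewrite Rminus_0_r in *; rewrite Rabs_pos_eq in * by lra; lra.
Qed.

Lemma infinite_sum_ext f g l :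
  (forall n, f n = g n) -> infinite_sum f l -> infinite_sum g l.
Proof.
  intros Hfg; apply (Un_cv_ext (fun N => sum_f_R0 f N)); intros N.
  apply sum_eq; intros; apply Hfg.
Qed.

Section AbelSummation.

Variables (p : nat) (a b : nat -> R).
Hypothesis a_S : forall n, a (S n) = a n + b n / INR (S n).

Lemma abel_term n :
  INR p * (a n / risingR n (S p))
  = a n / risingR n p - a (S n) / risingR (S n) p + b n / risingR n (S p).
Proof.
  replace (INR p * (a n / risingR n (S p))) with (a n * (INR p / risingR n (S p)))
    by (unfold Rdiv; ring).
  rewrite risingR_telescope, a_S, (risingR_S_front n p).
  pose proof (risingR_neq_0 n p); pose proof (risingR_neq_0 (S n) p).
  assert (INR (S n) <> 0) by (apply not_0_INR; lia).
  field; auto.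
Qed.

Lemma abel_partial_sum N :
  INR p * sum_f_R0 (fun n => a n / risingR n (S p)) N
  = a 0%nat / risingR 0 p - a (S N) / risingR (S N) p
    + sum_f_R0 (fun n => b n / risingR n (S p)) N.
Proof.
  induction N as [|N IH]; cbn [sum_f_R0]; [apply abel_term|].
  rewrite Rmult_plus_distr_l, IH, abel_term; ring.
Qed.

Lemma abel_series L : (0 < p)%nat ->
  infinite_sum (fun n => b n / risingR n (S p)) L ->
  Un_cv (fun n => a n / risingR n p) 0 ->
  infinite_sum (fun n => a n / risingR n (S p)) ((a 0%nat / risingR 0 p + L) / INR p).
Proof.
  intros Hp HL Ha.
  assert (Hpnz : INR p <> 0) by (apply not_0_INR; lia).
  apply (Un_cv_ext (fun N => (a 0%nat / risingR 0 p - a (S N) / risingR (S N) p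
                              + sum_f_R0 (fun n => b n / risingR n (S p)) N) * / INR p)).
  { intros N; rewrite <- abel_partial_sum; field; exact Hpnz. }
  replace ((a 0%nat / risingR 0 p + L) / INR p)
    with ((a 0%nat / risingR 0 p - 0 + L) * / INR p) by (unfold Rdiv; ring).
  apply CV_mult; [|apply Un_cv_const].
  apply CV_plus; [|exact HL].
  apply CV_minus; [apply Un_cv_const|].
  apply (Un_cv_ext (fun N => a (N + 1)%nat / risingR (N + 1) p)).
  - intros N; rewrite Nat.add_1_r; reflexivity.
  - apply (CV_shift' (fun N => a N / risingR N p)); exact Ha.
Qed.

End AbelSummation.

Lemma esym_recip_S n k :
  esym recip (S n) (S k) = esym recip n (S k) + esym recip n k / INR (S n).
Proof. rewrite esym_S_S; unfold recip, Rdiv; ring. Qed.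

Lemma esym_recip_nonneg n k : 0 <= esym recip n k.
Proof.
  revert k; induction n as [|n IH]; intros [|k]; try (rewrite esym_0; lra).
  - simpl; lra.
  - rewrite esym_recip_S; pose proof (IH (S k)); pose proof (IH k).
    assert (0 < / INR (S n)) by (apply Rinv_0_lt_compat, lt_0_INR; lia).
    unfold Rdiv; nra.
Qed.

Lemma esym_recip_sum M k :
  esym recip (S M) (S k) = sum_f_R0 (fun n => esym recip n k / INR (S n)) M.
Proof.
  induction M as [|M IH]; rewrite esym_recip_S; [simpl; ring|].
  rewrite IH; reflexivity.
Qed.

Lemma Rdiv_nonneg_le_contravar x a b : 0 <= x -> 0 < a <= b -> 0 <= x / b <= x / a.
Proof.
  intros Hx Hab; split; unfold Rdiv.
  - apply Rmult_le_pos; [lra|apply Rlt_le, Rinv_0_lt_compat; lra].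
  - apply Rmult_le_compat_l; [lra|apply Rinv_le_contravar; lra].
Qed.

Lemma inv_INR_S_cv : Un_cv (fun N => / INR (S N)) 0.
Proof.
  apply (cv_infty_cv_0 (fun N => INR (S N))); intros M.
  destruct (INR_unbounded M) as [N HN]; exists N; intros n Hn.
  apply Rlt_le_trans with (INR N); [lra|apply le_INR; lia].
Qed.

(* By [esym_recip_sum], e_(k+1)(N)/N is the Cesaro mean of e_k(n)/(n+1). *)
Lemma esym_recip_div_cv k : Un_cv (fun N => esym recip N k / INR (S N)) 0.
Proof.
  induction k as [|k IH].
  - apply (Un_cv_ext (fun N => / INR (S N))); [|exact inv_INR_S_cv].
    intros N; rewrite esym_0; unfold Rdiv; ring.
  - apply (Un_cv_squeeze_0 _ (fun N => sum_f_R0 (fun n => esym recip n k / INR (S n)) (pred N)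
                                      / INR N) 1); [|exact (Cesaro_1 _ 0 IH)].
    intros [|M] HM; [lia|]; simpl pred; rewrite <- esym_recip_sum.
    apply Rdiv_nonneg_le_contravar; [apply esym_recip_nonneg|].
    split; [apply lt_0_INR|apply le_INR]; lia.
Qed.

Lemma esym_recip_div_risingR_cv k p :
  (0 < p)%nat -> Un_cv (fun N => esym recip N k / risingR N p) 0.
Proof.
  intros Hp; apply (Un_cv_squeeze_0 _ (fun N => esym recip N k / INR (S N)) 0);
    [intros N _|exact (esym_recip_div_cv k)].
  apply Rdiv_nonneg_le_contravar; [apply esym_recip_nonneg|].
  split; [apply lt_0_INR; lia|apply risingR_ge, Hp].
Qed.

Lemma esym_recip_series k p : (0 < p)%nat ->
  infinite_sum (fun n => esym recip n k / risingR n (S p))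
    (/ INR (fact p) * / INR p ^ (k + 1)).
Proof.
  intros Hp; assert (INR p <> 0) by (apply not_0_INR; lia).
  pose proof (INR_fact_neq_0 p).
  induction k as [|k IH].
  - replace (/ INR (fact p) * / INR p ^ (0 + 1))
      with ((esym recip 0 0 / risingR 0 p + 0) / INR p)
      by (rewrite esym_0, risingR_0; simpl; field; auto).
    apply abel_series with (a := fun n => esym recip n 0) (b := fun _ => 0);
      [|assumption| |apply esym_recip_div_risingR_cv, Hp].
    + intros n; rewrite !esym_0; unfold Rdiv; ring.
    + apply (Un_cv_ext (fun _ => 0)); [|apply Un_cv_const].
      intros N; symmetry; apply sum_eq_R0; intros; unfold Rdiv; ring.
  - replace (/ INR (fact p) * / INR p ^ (S k + 1))
      with ((esym recip 0 (S k) / risingR 0 p + / INR (fact p) * / INR p ^ (k + 1)) / INR p)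
      by (pose proof (pow_nonzero (INR p) k ltac:(assumption)); simpl esym;
          rewrite !Nat.add_1_r; simpl pow; field; repeat split; auto; apply risingR_neq_0).
    apply abel_series with (a := fun n => esym recip n (S k)) (b := fun n => esym recip n k);
      [intros n; apply esym_recip_S|assumption|exact IH|apply esym_recip_div_risingR_cv, Hp].
Qed.

Theorem theorem6 (k q : nat) (hq : (2 <= q)%nat) :
  infinite_sum
    (fun n : nat => P k (fun l => harm l n) / risingR n q)
    (/ INR (fact (q - 1)) * / (INR (q - 1) ^ (k + 1))).
Proof.
  destruct q as [|p]; [lia|]; replace (S p - 1)%nat with p by lia.
  apply (infinite_sum_ext (fun n => esym recip n k / risingR n (S p))).
  - intros n; rewrite <- P_power_sum; unfold P; f_equal.
    apply Pq_ext; intros l; symmetry; apply harm_power_sum.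
  - apply esym_recip_series; lia.
Qed.
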